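(* Let $R$ be a dp-minimal integral domain with fraction field $K$ and maximal ideal $\mathfrak M$. For every prime ideal $\mathfrak p\neq\mathfrak M$ of $R$ we have $\mathfrak p:\mathfrak p=R_{\mathfrak p}$. If moreover $R$ is not a valuation ring, then $\mathfrak M^{-1}=\mathfrak M:\mathfrak M$.
   Context: Rings are commutative with identity; dp-minimal means the theory in the language of rings has dp-rank $1$ (such domains are local). For an ideal $I$ of a domain $R$ with fraction field $K$: $I:I=\{x\in K: xI\subseteq I\}$ and $I^{-1}=\{x\in K: xI\subseteq R\}$. *)

From HB Require Import structures.
From mathcomp Require Import all_boot all_order all_algebra.
Set Implicit Arguments. Unset Strict Implicit. Unset Printing Implicit Defensive.
Import GRing.Theory.
Local Open Scope ring_scope.

Definition is_ideal (R : comNzRingType) (I : R -> Prop) : Prop :=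
  [/\ I 0, (forall a b, I a -> I b -> I (a + b)) & (forall r a, I a -> I (r * a))].

Definition is_prime_ideal (R : comNzRingType) (P : R -> Prop) : Prop :=
  [/\ is_ideal P, ~ P 1 & (forall a b, P (a * b) -> P a \/ P b)].

Definition is_maximal_ideal (R : comNzRingType) (M : R -> Prop) : Prop :=
  [/\ is_ideal M, ~ M 1 &
      (forall J : R -> Prop, is_ideal J -> (forall a, M a -> J a) ->
         (forall a, J a <-> M a) \/ J 1)].

Definition is_the_maximal_ideal (R : comNzRingType) (M : R -> Prop) : Prop :=
  is_maximal_ideal M /\
  (forall J : R -> Prop, is_ideal J -> ~ J 1 -> forall a, J a -> M a).

Notation Frac R := {fraction R}.
Notation tofr := (@FracField.tofrac _).

Definition inI (R : idomainType) (I : R -> Prop) (x : Frac R) : Prop :=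
  exists a, I a /\ x = tofr a.

Definition colon_self (R : idomainType) (I : R -> Prop) (x : Frac R) : Prop :=
  forall a, I a -> inI I (x * tofr a).

Definition ideal_inv (R : idomainType) (I : R -> Prop) (x : Frac R) : Prop :=
  forall a, I a -> exists r : R, x * tofr a = tofr r.

Definition localization (R : idomainType) (P : R -> Prop) (x : Frac R) : Prop :=
  exists r s : R, ~ P s /\ x = tofr r / tofr s.

Definition valuation_ring (R : idomainType) : Prop :=
  forall x : Frac R, x != 0 ->
    (exists r : R, x = tofr r) \/ (exists r : R, x^-1 = tofr r).

(* Formulas: GRing.formula R (first-order ring formulas; constants from R are
   allowed as parameters, which does not change dp-rank; the Unit predicate and
   inverse are definable in the ring language).  In an environment [c :: a],
   variable 'X_0 plays the role of the single object variable x and the tail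
   [a] gives the parameter tuple y.
   By compactness, Th(R) has dp-rank >= 2 iff there are phi(x;y), psi(x;z)
   admitting ICT patterns of every finite size n in R itself. *)
Definition ict_pattern (R : unitRingType) (phi psi : GRing.formula R) (n : nat)
  : Prop :=
  exists a b : nat -> seq R,
    forall i j, (i < n)%N -> (j < n)%N ->
      exists c : R, forall k l, (k < n)%N -> (l < n)%N ->
        (GRing.holds (c :: a k) phi <-> k = i) /\
        (GRing.holds (c :: b l) psi <-> l = j).

Definition dp_minimal (R : unitRingType) : Prop :=
  forall phi psi : GRing.formula R, exists n : nat, ~ ict_pattern phi psi n.

From mathcomp Require Import all_boot all_order all_algebra.
From mathcomp Require Import ring.
From Stdlib Require Import Classical.
Set Implicit Arguments. Unset Strict Implicit. Unset Printing Implicit Defensive.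
Import GRing.Theory.
Local Open Scope ring_scope.

(* dp-minimality forbids ICT patterns for the formula [y2 | x - y1].  Applied
   to geometric sequences [u s^k] and [v s^l] with [s] in the maximal ideal,
   where the differences [s^i - s^k] are a power of [s] times a unit, this
   gives a bound [n] such that [v | u s^i] or [u | v s^j] for some [i, j < n].
   For a prime [P] strictly inside [M], taking [s] in [M] but not in [P]
   shows that [P] lies in [sR] for every [s] outside [P], and both inclusions
   between [P : P] and [R_P] follow.  If some [x] in [M^-1] is not in [M : M],
   then [x a] is a unit for some [a] in [M], so [M = aR]; comparability with
   [s = a] then makes [R] a valuation ring. *)

Definition dvdr (R : comNzRingType) (v x : R) := exists w, x = v * w.

Definition incongruent_mod (R : comNzRingType) (v : R) (g : nat -> R) (n : nat) :=
  forall i k, (i < n)%N -> (k < n)%N -> dvdr v (g i - g k) -> i = k.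

Definition dvd_sub_formula (R : unitRingType) : GRing.formula R :=
  GRing.Exists 3 (GRing.Equal (GRing.Add (GRing.Var R 0) (GRing.Opp (GRing.Var R 1)))
                              (GRing.Mul (GRing.Var R 2) (GRing.Var R 3))).

Lemma holds_dvd_sub_formula (R : comUnitRingType) (c y1 y2 : R) :
  GRing.holds [:: c; y1; y2] (dvd_sub_formula R) <-> dvdr y2 (c - y1).
Proof. by []. Qed.

Lemma dp_minimal_incongruent_bound (R : comUnitRingType) : dp_minimal R ->
  exists n, forall (u v : R) (g h : nat -> R),
    (forall k, dvdr u (g k)) -> (forall l, dvdr v (h l)) ->
    ~ (incongruent_mod v g n /\ incongruent_mod u h n).
Proof.
move=> dpR; have [n no_ict] := dpR (dvd_sub_formula R) (dvd_sub_formula R).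
exists n => u v g h ug vh [inc_g inc_h]; apply: no_ict.
exists (fun k => [:: g k; v]), (fun l => [:: h l; u]) => i j ltin ltjn.
(* Since [h j] is divisible by [v] and [g i] by [u], the element [g i + h j]
   is congruent to [g k] mod [v] exactly when [k = i], and to [h l] mod [u]
   exactly when [l = j]. *)
exists (g i + h j) => k l ltkn ltln; rewrite !holds_dvd_sub_formula.
have [wg giE] := ug i; have [wh hjE] := vh j.
split; split.
- move=> [w Hw]; apply/esym/(inc_g i k ltin ltkn); exists (w - wh).
  by rewrite mulrBr -Hw hjE; ring.
- by move=> ->; exists wh; rewrite hjE; ring.
- move=> [w Hw]; apply/esym/(inc_h j l ltjn ltln); exists (w - wg).
  by rewrite mulrBr -Hw giE; ring.
- by move=> ->; exists wg; rewrite giE; ring.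
Qed.

Lemma dvdr_unit_mulr (R : comNzRingType) (v x y e : R) :
  e * y = 1 -> dvdr v (x * y) -> dvdr v x.
Proof.
move=> eyE [w Hw]; exists (w * e).
by rewrite mulrA -Hw -mulrA (mulrC y) eyE mulr1.
Qed.

Lemma dvdr_pow_mul_pow (R : idomainType) (s a : R) (m i : nat) :
  s != 0 -> (i < m)%N -> dvdr (s ^+ m) (a * s ^+ i) -> dvdr s a.
Proof.
move=> s0 ltim [w Hw].
have si0 : s ^+ i != 0 by rewrite expf_neq0.
have : a * s ^+ i = (s ^+ (m - i) * w) * s ^+ i.
  by rewrite Hw mulrAC -exprD subnK // ltnW.
move/(mulIf si0) => ->; rewrite -(subnSK ltim) exprS.
by exists (s ^+ (m - i.+1) * w); rewrite mulrA.
Qed.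

Section PrimeIdeal.
Variables (R : comNzRingType) (P : R -> Prop).
Hypothesis primeP : is_prime_ideal P.

Lemma prime_ideal0 : P 0. Proof. by case: primeP => -[]. Qed.

Lemma prime_idealM r a : P a -> P (r * a).
Proof. by case: primeP => -[] _ _ PM _ _; apply: PM. Qed.

Lemma prime_idealP a b : P (a * b) -> P a \/ P b.
Proof. by case: primeP => _ _; apply. Qed.

Lemma prime_ideal_notinX s m : ~ P s -> ~ P (s ^+ m).
Proof.
move=> nPs; elim: m => [|m IHm]; first by rewrite expr0; case: primeP.
by rewrite exprS => /prime_idealP [].
Qed.

Lemma prime_ideal_notin_neq0 s : ~ P s -> s != 0.
Proof. by move=> nPs; apply: contra_notN nPs => /eqP ->; apply: prime_ideal0. Qed.

End PrimeIdeal.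

Section LocalRing.
Variables (R : comNzRingType) (M : R -> Prop).
Hypothesis maxM : is_the_maximal_ideal M.

Lemma max_ideal0 : M 0. Proof. by case: maxM => -[[]]. Qed.

Lemma max_idealM r a : M a -> M (r * a).
Proof. by case: maxM => -[[_ _ MM]] _ _ _; apply: MM. Qed.

Lemma max_idealD a b : M a -> M b -> M (a + b).
Proof. by case: maxM => -[[_ MD _]] _ _ _; apply: MD. Qed.

Lemma max_ideal_not1 : ~ M 1. Proof. by case: maxM => -[]. Qed.

Lemma sub_max_ideal (J : R -> Prop) a : is_ideal J -> ~ J 1 -> J a -> M a.
Proof. by case: maxM => _ subM JI nJ1 Ja; apply: subM Ja. Qed.

Lemma notin_max_unit x : ~ M x -> exists e, e * x = 1.
Proof.
move=> nMx; apply: NNPP => no_inv; apply: nMx.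
apply: (@sub_max_ideal (fun z => exists r, z = r * x)); last by exists 1; rewrite mul1r.
- split; first by exists 0; rewrite mul0r.
  + by move=> _ _ [r1 ->] [r2 ->]; exists (r1 + r2); rewrite mulrDl.
  + by move=> r _ [r1 ->]; exists (r * r1); rewrite mulrA.
- by move=> [r Hr]; apply: no_inv; exists r.
Qed.

Lemma max_idealX s m : M s -> (0 < m)%N -> M (s ^+ m).
Proof. by move=> Ms; case: m => // m _; rewrite exprSr; apply: max_idealM. Qed.

Lemma one_subX_unit s m : M s -> (0 < m)%N -> exists e, e * (1 - s ^+ m) = 1.
Proof.
move=> Ms m0; apply: notin_max_unit => M1s; apply: max_ideal_not1.
rewrite -(subrK (s ^+ m) 1); exact: (max_idealD M1s (max_idealX Ms m0)).
Qed.

Lemma dvdr_mul_subX s (u v : R) i k : M s -> i <> k ->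
  dvdr v (u * s ^+ i - u * s ^+ k) -> dvdr v (u * s ^+ minn i k).
Proof.
move=> Ms.
wlog ltik : i k / (i < k)%N => [hwlog neik vd|_ vd].
  have [ltik|ltki|//] := ltngtP i k.
    by have := hwlog i k ltik neik vd; rewrite (minn_idPl (ltnW ltik)).
  have := hwlog k i ltki (nesym neik); rewrite (minn_idPl (ltnW ltki)); apply.
  by case: vd => w Hw; exists (- w); rewrite -opprB Hw mulrN.
rewrite (minn_idPl (ltnW ltik)).
have [e He] := one_subX_unit Ms (ltac:(by rewrite subn_gt0) : (0 < k - i)%N).
apply: (dvdr_unit_mulr He).
by rewrite mulrBr mulr1 -mulrA -exprD (subnKC (ltnW ltik)).
Qed.

End LocalRing.

Lemma dp_minimal_local_dvdr_mulX (R : comUnitRingType) (M : R -> Prop) :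
  dp_minimal R -> is_the_maximal_ideal M -> exists n, forall s u v : R, M s ->
    (exists2 i, (i < n)%N & dvdr v (u * s ^+ i)) \/
    (exists2 j, (j < n)%N & dvdr u (v * s ^+ j)).
Proof.
move=> dpR maxM; have [n no_pattern] := dp_minimal_incongruent_bound dpR.
exists n => s u v Ms; apply: NNPP => no_dvdr.
apply: (no_pattern u v (fun k => u * s ^+ k) (fun l => v * s ^+ l)).
- by move=> k; exists (s ^+ k).
- by move=> l; exists (s ^+ l).
split=> i k ltin ltkn /= vd; apply: NNPP => neik; apply: no_dvdr.
- by left; exists (minn i k); [rewrite gtn_min ltin | exact: (dvdr_mul_subX maxM)].
- by right; exists (minn i k); [rewrite gtn_min ltin | exact: (dvdr_mul_subX maxM)].
Qed.

Lemma tofrac_div_exists (R : idomainType) (x : {fraction R}) :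
  exists r t : R, t != 0 /\ x = tofr r / tofr t.
Proof.
elim/quotW: x => y; exists \n_y, \d_y; split; first exact: denom_ratioP.
have d0 : tofr \d_y != 0 by rewrite tofrac_eq0 denom_ratioP.
apply: (mulIf d0); rewrite mulfVK //.
unlock FracField.tofrac; rewrite -[LHS]/(FracField.mul _ _) -FracField.pi_mul.
apply/eqmodP; rewrite /= FracField.equivfE /FracField.mulf.
rewrite !numden_Ratio ?oner_eq0 ?mulf_neq0 ?denom_ratioP ?oner_eq0 //.
by rewrite !mulr1 mulrC.
Qed.

Lemma tofrac_div_eq (R : idomainType) (r t w q : R) : t != 0 -> q != 0 ->
  r * q = t * w -> tofr r / tofr t = tofr w / tofr q.
Proof.
move=> t0 q0 E; apply/eqP; rewrite eqr_div ?tofrac_eq0 // -!tofracM tofrac_eq.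
by rewrite E mulrC.
Qed.

Lemma valuation_ring_of_dvdr_total (R : idomainType) :
  (forall b c : R, dvdr c b \/ dvdr b c) -> valuation_ring R.
Proof.
move=> total y y0; have [b [c [c0 yE]]] := tofrac_div_exists y.
have b0 : tofr b != 0 by apply: contraNneq y0 => b0; rewrite yE b0 mul0r.
have {}c0 : tofr c != 0 by rewrite tofrac_eq0.
case: (total b c) => [[r bE]|[r cE]].
- by left; exists r; rewrite yE bE tofracM mulrC mulKf.
- by right; exists r; rewrite yE invf_div cE tofracM mulrC mulKf.
Qed.

Section DpMinimalDomain.
Variables (R : idomainType) (M : R -> Prop) (n : nat).
Hypothesis maxM : is_the_maximal_ideal M.
Hypothesis dvdr_mulX : forall s u v : R, M s ->
  (exists2 i, (i < n)%N & dvdr v (u * s ^+ i)) \/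
  (exists2 j, (j < n)%N & dvdr u (v * s ^+ j)).

Lemma prime_ideal_sub_dvdr (P : R -> Prop) s a :
  is_prime_ideal P -> ~ P s -> P a -> dvdr s a.
Proof.
move=> primeP nPs Pa; have [Ms|nMs] := classic (M s); last first.
  have [e es] := notin_max_unit maxM nMs.
  by exists (e * a); rewrite mulrA (mulrC s) es mul1r.
case: (dvdr_mulX a (s ^+ n) Ms) => [[i ltin snd]|[j _ [w aE]]].
  exact: (dvdr_pow_mul_pow (prime_ideal_notin_neq0 primeP nPs) ltin snd).
exfalso; apply: (prime_ideal_notinX primeP (m := n + j) nPs).
by rewrite exprD aE mulrC; apply: prime_idealM.
Qed.

Lemma colon_prime_localization (P : R -> Prop) :
  is_prime_ideal P -> ~ (forall a, P a <-> M a) ->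
  forall x, colon_self P x <-> localization P x.
Proof.
move=> primeP nePM x.
have [s Ms nPs] : exists2 s, M s & ~ P s.
  apply: NNPP => noS; apply: nePM => a; split.
    by case: primeP => idP nP1 _; exact: (sub_max_ideal maxM idP nP1).
  by move=> Ma; apply: NNPP => nPa; apply: noS; exists a.
split.
- move=> colx; have [r [t [t0 xE]]] := tofrac_div_exists x; rewrite xE in colx *.
  case: (dvdr_mulX r t Ms) => [[i _ [w rE]]|[j _ [w tE]]].
    exists w, (s ^+ i); split; first exact: prime_ideal_notinX.
    by apply: tofrac_div_eq; rewrite // expf_neq0 // (prime_ideal_notin_neq0 primeP nPs).
  have [Pw|nPw] := classic (P w); last first.
    exists (s ^+ j), w; split=> //.
    by apply: tofrac_div_eq => //; exact: (prime_ideal_notin_neq0 primeP nPw).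
  have [a [Pa aE]] := colx w Pw.
  suff sjE : s ^+ j = a by case: (prime_ideal_notinX primeP (m := j) nPs); rewrite sjE.
  apply/eqP; rewrite -tofrac_eq -aE eq_sym mulrAC -tofracM -tE tofracM mulrAC.
  by rewrite mulfV ?mul1r // tofrac_eq0.
- move=> [r [t [nPt ->]]] a Pa.
  have [w aE] := prime_ideal_sub_dvdr primeP nPt Pa.
  have Pw : P w by move: Pa; rewrite aE => /(prime_idealP primeP) [].
  have t0 : tofr t != 0 by rewrite tofrac_eq0 (prime_ideal_notin_neq0 primeP nPt).
  exists (r * w); split; first exact: prime_idealM.
  by rewrite aE !tofracM mulrA divfK.
Qed.

Lemma dvdr_total_of_mul_pow a b c w i : a != 0 -> (forall m, M m -> dvdr a m) ->
  b * a ^+ i = c * w -> dvdr c b \/ dvdr b c.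
Proof.
move=> a0 maxa; elim: i w => [|i IHi] w.
  by rewrite expr0 mulr1 => ->; left; exists w.
have [Mw|nMw] := classic (M w).
  have [w' ->] := maxa w Mw.
  by rewrite exprSr mulrA (mulrC a w') mulrA => /(mulIf a0); apply: IHi.
have [e ew] := notin_max_unit maxM nMw => abE.
by right; exists (a ^+ i.+1 * e); rewrite mulrA abE -mulrA (mulrC w) ew mulr1.
Qed.

Lemma valuation_ring_of_principal_max a :
  M a -> a != 0 -> (forall m, M m -> dvdr a m) -> valuation_ring R.
Proof.
move=> Ma a0 maxa; apply: valuation_ring_of_dvdr_total => b c.
case: (dvdr_mulX b c Ma) => [[i _ [w bE]]|[j _ [w cE]]].
- exact: (dvdr_total_of_mul_pow a0 maxa bE).
- by apply/or_comm; exact: (dvdr_total_of_mul_pow a0 maxa cE).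
Qed.

Lemma ideal_inv_max_colon :
  ~ valuation_ring R -> forall x, ideal_inv M x <-> colon_self M x.
Proof.
move=> nval x; split; last by move=> colx a Ma; have [r [_ ->]] := colx a Ma; exists r.
move=> invx a Ma; have [r xaE] := invx a Ma.
have [Mr|nMr] := classic (M r); first by exists r.
have [e er] := notin_max_unit maxM nMr.
case: nval; apply: (valuation_ring_of_principal_max Ma).
  apply: contra_notN nMr => /eqP a0; move: xaE; rewrite a0 tofrac0 mulr0.
  by move/eqP; rewrite eq_sym tofrac_eq0 => /eqP ->; exact: (max_ideal0 maxM).
(* [x a = r] is a unit, so [m = a (x m) / r] for every [m] in [M]. *)
move=> m Mm; have [rm xmE] := invx m Mm.
have rmE : r * m = a * rm.
  by apply/eqP; rewrite -tofrac_eq !tofracM -xaE -xmE; apply/eqP; ring.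
by exists (e * rm); rewrite -[m]mul1r -er -mulrA rmE mulrCA.
Qed.

End DpMinimalDomain.

Unset Implicit Arguments.

Theorem mainTheorem12 (R : idomainType) (M : R -> Prop) :
  dp_minimal R -> is_the_maximal_ideal M ->
  (forall P : R -> Prop, is_prime_ideal P -> ~ (forall a, P a <-> M a) ->
     forall x : {fraction R}, colon_self P x <-> localization P x) /\
  (~ valuation_ring R ->
     forall x : {fraction R}, ideal_inv M x <-> colon_self M x).
Proof.
move=> dpR maxM; have [n dvdr_mulX] := dp_minimal_local_dvdr_mulX dpR maxM.
split.
- exact: (colon_prime_localization maxM dvdr_mulX).
- exact: (ideal_inv_max_colon maxM dvdr_mulX).
Qed.
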